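(* Let $i\ge0$, let $\mathbf{e}_i$ be a 1-dimensional error pattern at level $i$, and let $\mathbf{e}_{i+2}$ be a 1-dimensional second preimage of $\mathbf{e}_i$, i.e. a pattern at level $i+2$ whose image after two successive reduction stages is $\mathbf{e}_i$. Then $\mathrm{wt}(\mathbf{e}_{i+2})\ge2\,\mathrm{wt}(\mathbf{e}_i)$.
   Context: 1-dimensional model. For $j\ge0$, the line at level $j$ is the cycle with vertex set $\mathbb{Z}/2^j\mathbb{Z}$ and edges $\{v,v+1\}$, $v\in\mathbb{Z}/2^j\mathbb{Z}$ (for $j=0$, one vertex with a loop edge). A 1-dimensional error pattern at level $j$ is a subset of these edges; $\mathrm{wt}$ is its number of edges; its syndrome is the set of vertices incident to an odd number of its edges. At level $j+1$, block $m\in\mathbb{Z}/2^j\mathbb{Z}$ consists of the left edge $\{2m,2m+1\}$ and right edge $\{2m+1,2m+2\}$ and corresponds to the edge $\{m,m+1\}$ at level $j$. One reduction stage applied to a pattern $\mathbf{f}$ at level $j+1$ with syndrome $S$: (a) for every block, if $2m+1,2m+2\in S$, flip (add mod 2) the right edge and remove both from $S$; (b) then for every block, if $2m+1$ is still in $S$, flip the left edge. In the resulting pattern $\mathbf{f}'$ each block contains $0$ or $2$ edges; the image of $\mathbf{f}$ is the pattern at level $j$ containing $\{m,m+1\}$ iff block $m\subseteq\mathbf{f}'$. *)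

From mathcomp Require Import all_boot.
Set Implicit Arguments. Unset Strict Implicit. Unset Printing Implicit Defensive.

(* Level j: cycle on vertices Z/2^j; edge v (v : 'I_(2^j)) is {v, v+1}.
   Edges are indexed by their "left" vertex, so at level 1 the two edges
   {0,1},{1,0} are distinct parallel edges and at level 0 the single edge is
   a loop at 0. *)

Lemma pow2_gt0 (j : nat) : 0 < 2 ^ j.
Proof. by rewrite expn_gt0. Qed.

Definition modI (j k : nat) : 'I_(2 ^ j) := Ordinal (ltn_pmod k (pow2_gt0 j)).

Definition pattern (j : nat) := {set 'I_(2 ^ j)}.

Definition wt (j : nat) (f : pattern j) : nat := #|f|.

(* Vertex u is incident to edges u ({u,u+1}) and u-1 ({u-1,u}); a loop
   (level 0) is incident twice, hence never contributes to the syndrome. *)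
Definition syndrome (j : nat) (f : pattern j) : {set 'I_(2 ^ j)} :=
  [set u : 'I_(2 ^ j) | (u \in f) (+) (modI j (u + (2 ^ j).-1) \in f)].

(* Block m at level j+1: left edge {2m,2m+1}, right edge {2m+1,2m+2}. *)
Definition left_edge (j : nat) (m : 'I_(2 ^ j)) : 'I_(2 ^ j.+1) := modI j.+1 (2 * m).
Definition right_edge (j : nat) (m : 'I_(2 ^ j)) : 'I_(2 ^ j.+1) := modI j.+1 (2 * m + 1).
Definition odd_vtx (j : nat) (m : 'I_(2 ^ j)) : 'I_(2 ^ j.+1) := modI j.+1 (2 * m + 1).
Definition even_vtx (j : nat) (m : 'I_(2 ^ j)) : 'I_(2 ^ j.+1) := modI j.+1 (2 * m + 2).

Definition reduced_pattern (j : nat) (f : pattern j.+1) : pattern j.+1 :=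
  let S := syndrome f in
  let A := [set m : 'I_(2 ^ j) | (odd_vtx m \in S) && (even_vtx m \in S)] in
  let Rflip := [set e | [exists m in A, e == right_edge m]] in
  let S1 := S :\: [set v | [exists m in A, (v == odd_vtx m) || (v == even_vtx m)]] in
  let Lflip := [set e | [exists m : 'I_(2 ^ j), (odd_vtx m \in S1) && (e == left_edge m)]] in
  [set e | (e \in f) (+) (e \in Rflip) (+) (e \in Lflip)].

Definition stage_image (j : nat) (f : pattern j.+1) : pattern j :=
  let f' := reduced_pattern f in
  [set m : 'I_(2 ^ j) | (left_edge m \in f') && (right_edge m \in f')].

From mathcomp Require Import all_boot zify.
Set Implicit Arguments. Unset Strict Implicit. Unset Printing Implicit Defensive.

(* A reduction stage is a local majority vote: edge m of the coarser level is
   present iff at least two of the edges 2m, 2m+1, 2m+2 of the finer level are.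
   After two stages, the bit of edge m is a majority of three majorities over
   the edges 4m, ..., 4m+6, and a check of the 2^7 cases gives
     2 * image(m) + c(m) <= F(4m) + F(4m+1) + F(4m+2) + F(4m+3) + c(m+1)
   for the potential c(m) = F(4m) || F(4m+1) && F(4m+2). Summed around the cycle,
   the potentials telescope. *)

Lemma exists_eq_inj (I T : finType) (g : I -> T) (P : pred I) x :
  injective g -> [exists y, P y && (g x == g y)] = P x.
Proof.
move=> g_inj; apply/existsP/idP => [[y /andP [Py /eqP /g_inj ->]] // | Px].
by exists x; rewrite Px eqxx.
Qed.

Lemma eq_parity n (x y : 'I_n) : odd x != odd y -> (x == y) = false.
Proof. by apply: contraNF => /eqP ->. Qed.

Lemma sum_nat_blocks (F : nat -> nat) n k :
  \sum_(0 <= i < n * k) F i = \sum_(0 <= i < n) \sum_(r < k) F (k * i + r).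
Proof.
rewrite big_nat_mul; apply: eq_bigr => i _.
rewrite -[i * k]add0n big_addn mulSn addnK big_mkord.
by apply: eq_bigr => r _; rewrite addnC mulnC.
Qed.

Lemma sum_leq_potential (a b p : nat -> nat) N :
  p N = p 0 -> (forall m, m < N -> a m + p m <= b m + p m.+1) ->
  \sum_(0 <= m < N) a m <= \sum_(0 <= m < N) b m.
Proof.
move=> pN step.
suff: \sum_(0 <= m < N) a m + p 0 <= \sum_(0 <= m < N) b m + p N.
  by rewrite pN leq_add2r.
elim: N {pN} step => [|N IH] step; first by rewrite !big_geq.
rewrite !big_nat_recr //=.
have := step N (ltnSn N); have := IH (fun m lt_mN => step m (ltnW lt_mN)).
lia.
Qed.

Definition maj (a b c : bool) := [|| a && b, b && c | a && c].

Definition maj_stage (F : nat -> bool) (k : nat) :=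
  maj (F (2 * k)) (F (2 * k + 1)) (F (2 * k + 2)).

Definition potential (F : nat -> bool) (m : nat) :=
  F (4 * m) || F (4 * m + 1) && F (4 * m + 2).

Lemma maj_stage2E F m :
  maj_stage (maj_stage F) m =
  maj (maj (F (4 * m)) (F (4 * m + 1)) (F (4 * m + 2)))
      (maj (F (4 * m + 2)) (F (4 * m + 3)) (F (4 * m + 4)))
      (maj (F (4 * m + 4)) (F (4 * m + 5)) (F (4 * m + 6))).
Proof. by rewrite /maj_stage; congr maj; congr maj; congr F; lia. Qed.

Lemma maj_maj_le (b0 b1 b2 b3 b4 b5 b6 : bool) :
  2 * maj (maj b0 b1 b2) (maj b2 b3 b4) (maj b4 b5 b6) + (b0 || b1 && b2)
  <= b0 + b1 + b2 + b3 + (b4 || b5 && b6).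
Proof. by case: b0; case: b1; case: b2; case: b3; case: b4; case: b5; case: b6. Qed.

Lemma maj_stage2_potential F m :
  2 * maj_stage (maj_stage F) m + potential F m
  <= \sum_(r < 4) F (4 * m + r) + potential F m.+1.
Proof.
rewrite maj_stage2E /potential !big_ord_recr big_ord0 /= add0n addn0.
have -> : 4 * m.+1 = 4 * m + 4 by lia.
have -> : 4 * m + 4 + 1 = 4 * m + 5 by lia.
have -> : 4 * m + 4 + 2 = 4 * m + 6 by lia.
exact: maj_maj_le.
Qed.

Lemma potential_period F N :
  (forall k, F (4 * N + k) = F k) -> potential F N = potential F 0.
Proof.
by move=> F_period; rewrite /potential !F_period -[4 * N]addn0 F_period muln0.
Qed.

Definition edgeb j (f : pattern j) (k : nat) := modI j k \in f.

Section EdgeBits.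
Variables (j : nat) (f : pattern j).

Lemma edgeb_mod k k' : k = k' %[mod 2 ^ j] -> edgeb f k = edgeb f k'.
Proof. by move=> eq_kk'; congr (_ \in f); apply: val_inj. Qed.

Lemma edgeb_ord (u : 'I_(2 ^ j)) : edgeb f u = (u \in f).
Proof. by congr (_ \in f); apply: val_inj; rewrite /= modn_small. Qed.

Lemma wt_sum : wt f = \sum_(0 <= k < 2 ^ j) edgeb f k.
Proof.
rewrite /wt -sum1_card big_mkcond big_mkord /=.
by apply: eq_bigr => u _; rewrite edgeb_ord; case: (u \in f).
Qed.

Lemma syndromeE k :
  (modI j (k + 1) \in syndrome f) = edgeb f (k + 1) (+) edgeb f k.
Proof.
rewrite inE; congr (_ (+) _); apply: edgeb_mod => /=.
have pos := pow2_gt0 j.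
by rewrite modnDml (_ : k + 1 + (2 ^ j).-1 = k + 2 ^ j) ?modnDr //; lia.
Qed.

End EdgeBits.

Lemma odd_modI j k : odd (modI j.+1 k) = odd k.
Proof. by rewrite /= odd_mod // expnS oddM. Qed.

Section Blocks.
Variables (j : nat) (m : 'I_(2 ^ j)).

Lemma val_left_edge : val (left_edge m) = 2 * m.
Proof. by rewrite /= modn_small // expnS; have := ltn_ord m; lia. Qed.

Lemma val_right_edge : val (right_edge m) = 2 * m + 1.
Proof. by rewrite /= modn_small // expnS; have := ltn_ord m; lia. Qed.

Lemma odd_left_edge : odd (left_edge m) = false.
Proof. by rewrite odd_modI oddM. Qed.

Lemma odd_right_edge : odd (right_edge m).
Proof. by rewrite odd_modI addn1 /= oddM. Qed.

Lemma odd_even_vtx : odd (even_vtx m) = false.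
Proof. by rewrite odd_modI oddD oddM. Qed.

End Blocks.

Lemma left_edge_inj j : injective (@left_edge j).
Proof.
move=> m m' /(congr1 val); rewrite !val_left_edge => /eqP.
by rewrite eqn_mul2l => /eqP /val_inj.
Qed.

Lemma right_edge_inj j : injective (@right_edge j).
Proof.
move=> m m' /(congr1 val); rewrite !val_right_edge => /addIn /eqP.
by rewrite eqn_mul2l => /eqP /val_inj.
Qed.

Lemma odd_vtx_inj j : injective (@odd_vtx j).
Proof. exact: right_edge_inj. Qed.

Lemma exists_eq_parity j (P : pred 'I_(2 ^ j))
    (g : 'I_(2 ^ j) -> 'I_(2 ^ j.+1)) (x : 'I_(2 ^ j.+1)) :
  (forall y, odd x != odd (g y)) -> [exists y, P y && (x == g y)] = false.
Proof. by move=> odd_g; apply/existsP => -[y]; rewrite eq_parity ?andbF. Qed.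

Section ReducedPattern.
Variables (j : nat) (f : pattern j.+1) (m : 'I_(2 ^ j)).

(* In both proofs the syndrome is generalized so that [inE] does not unfold it. *)
Lemma reduced_right_edge :
  (right_edge m \in reduced_pattern f) =
  (right_edge m \in f) (+) (odd_vtx m \in syndrome f) && (even_vtx m \in syndrome f).
Proof.
rewrite /reduced_pattern /=; move: (syndrome f) => S.
rewrite !inE exists_eq_inj ?inE; last exact: right_edge_inj.
by rewrite exists_eq_parity ?addbF // => y; rewrite odd_left_edge odd_right_edge.
Qed.

Lemma reduced_left_edge :
  (left_edge m \in reduced_pattern f) =
  (left_edge m \in f) (+) (odd_vtx m \in syndrome f) && (even_vtx m \notin syndrome f).
Proof.
rewrite /reduced_pattern /=; move: (syndrome f) => S.
rewrite !inE exists_eq_parity; last by move=> y; rewrite odd_left_edge odd_right_edge.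
rewrite exists_eq_inj; last exact: left_edge_inj.
have odd_vtx_removed (A : pred 'I_(2 ^ j)) :
  [exists y, A y && ((odd_vtx m == odd_vtx y) || (odd_vtx m == even_vtx y))] = A m.
  rewrite -(exists_eq_inj A m (@odd_vtx_inj j)); apply: eq_existsb => y.
  by rewrite (@eq_parity _ (odd_vtx m) (even_vtx y)) ?orbF // odd_even_vtx odd_right_edge.
rewrite !inE odd_vtx_removed !inE.
by case: (odd_vtx m \in S); case: (even_vtx m \in S); rewrite ?addbF.
Qed.

End ReducedPattern.

Section StageImage.
Variables (j : nat) (f : pattern j.+1).

Lemma stage_imageE (m : 'I_(2 ^ j)) : (m \in stage_image f) = maj_stage (edgeb f) m.
Proof.
rewrite inE reduced_left_edge reduced_right_edge /even_vtx.
have -> : 2 * m + 2 = 2 * m + 1 + 1 by rewrite -addnA.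
rewrite !syndromeE -[left_edge m \in f]/(edgeb f (2 * m)).
rewrite -[right_edge m \in f]/(edgeb f (2 * m + 1)) /maj_stage -addnA.
by case: (edgeb f _); case: (edgeb f _); case: (edgeb f _).
Qed.

Lemma edgeb_stage_image k : edgeb (stage_image f) k = maj_stage (edgeb f) k.
Proof.
rewrite /edgeb stage_imageE.
by congr maj; apply: edgeb_mod; rewrite muln_modr -expnS ?modnDml ?modn_mod.
Qed.

End StageImage.

Lemma edgeb_stage_image2 j (f : pattern j.+2) k :
  edgeb (stage_image (stage_image f)) k = maj_stage (maj_stage (edgeb f)) k.
Proof. by rewrite edgeb_stage_image /maj_stage !edgeb_stage_image. Qed.

Theorem lemma3 (i : nat) (ei : pattern i) (ei2 : pattern i.+2) :
  stage_image (stage_image ei2) = ei -> 2 * wt ei <= wt ei2.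
Proof.
move=> <-; set F := edgeb ei2; set N := 2 ^ i.
have size4 : 2 ^ i.+2 = N * 4 by rewrite !expnS mulnA mulnC.
have F_period k : F (4 * N + k) = F k.
  by apply: edgeb_mod; rewrite mulnC -size4 modnDl.
rewrite !wt_sum size4 sum_nat_blocks big_distrr /=.
under eq_bigr do rewrite edgeb_stage_image2.
apply: (sum_leq_potential (p := potential F)) => [|m _].
  by rewrite potential_period.
exact: maj_stage2_potential.
Qed.
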